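(* Let $\alpha_1,\alpha_2,\alpha_3,\epsilon_1,\epsilon_2,\epsilon_3,f_1,f_2,f_3$ be real parameters and consider the system on $\mathbb{R}^3$ \[ \frac{dq_i}{dt} = q_i\Big(f_i + \sum_{j=1}^3 \beta_{ij} q_j\Big),\qquad i=1,2,3, \qquad \beta = -\begin{bmatrix}\epsilon_1 & \alpha_1 & \alpha_1\\ \alpha_2 & \epsilon_2 & \alpha_2\\ \alpha_3 & \alpha_3 & \epsilon_3\end{bmatrix}. \] If this system has a non-constant first integral that is analytic at the origin $q=0$, then $f_1,f_2,f_3$ are linearly dependent over the non-negative integers, i.e. there exist $n_1,n_2,n_3\in\mathbb{Z}_{\ge 0}$, not all zero, with $n_1f_1+n_2f_2+n_3f_3=0$.
   Context: A first integral is a function $I(q_1,q_2,q_3)$ that is constant along all solutions of the system. This system is the three-firm Cournot oligopoly with gradient adjustment, after rescaling time by the demand slope $b$, with $f_i=\frac{\alpha_i}{b}(a-d_i)$ and $\epsilon_i=\frac{2\alpha_i}{b}(b+e_i)$, where $\alpha_i$ are adjustment speeds, $a$ the demand intercept and $d_i,e_i$ the linear and quadratic cost coefficients. *)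

From Stdlib Require Import Reals.
From Coquelicot Require Import Coquelicot.
Open Scope R_scope.

Definition beta (a1 a2 a3 e1 e2 e3 : R) (i j : nat) : R :=
  match i, j with
  | 1%nat, 1%nat => - e1 | 1%nat, _ => - a1
  | 2%nat, 2%nat => - e2 | 2%nat, _ => - a2
  | 3%nat, 3%nat => - e3 | 3%nat, _ => - a3
  | _, _ => 0
  end.

Definition field (a1 a2 a3 e1 e2 e3 fi : R) (i : nat) (q1 q2 q3 : R) : R :=
  let b := beta a1 a2 a3 e1 e2 e3 in
  (match i with 1%nat => q1 | 2%nat => q2 | _ => q3 end) *
  (fi + (b i 1%nat * q1 + b i 2%nat * q2 + b i 3%nat * q3)).

Definition in_box (r x y z : R) : Prop := Rabs x < r /\ Rabs y < r /\ Rabs z < r.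

(* Degree-n homogeneous part of the triple power series with coefficients c. *)
Definition psum3 (c : nat -> nat -> nat -> R) (x y z : R) (n : nat) : R :=
  sum_f_R0 (fun i => sum_f_R0 (fun j =>
     c i j (n - i - j)%nat * x ^ i * y ^ j * z ^ (n - i - j)) (n - i)) n.

Definition psum3_abs (c : nat -> nat -> nat -> R) (x y z : R) (n : nat) : R :=
  sum_f_R0 (fun i => sum_f_R0 (fun j =>
     Rabs (c i j (n - i - j)%nat * x ^ i * y ^ j * z ^ (n - i - j))) (n - i)) n.

Definition analytic_on_box (I : R -> R -> R -> R) (r : R) : Prop :=
  0 < r /\ exists c : nat -> nat -> nat -> R,
    forall x y z, in_box r x y z ->
      ex_series (psum3_abs c x y z) /\ is_series (psum3 c x y z) (I x y z).

Definition solution_on (a1 a2 a3 e1 e2 e3 f1 f2 f3 r : R)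
  (q1 q2 q3 : R -> R) (t0 t1 : R) : Prop :=
  forall t, t0 <= t <= t1 ->
    in_box r (q1 t) (q2 t) (q3 t) /\
    is_derive q1 t (field a1 a2 a3 e1 e2 e3 f1 1 (q1 t) (q2 t) (q3 t)) /\
    is_derive q2 t (field a1 a2 a3 e1 e2 e3 f2 2 (q1 t) (q2 t) (q3 t)) /\
    is_derive q3 t (field a1 a2 a3 e1 e2 e3 f3 3 (q1 t) (q2 t) (q3 t)).

Definition first_integral_on_box (a1 a2 a3 e1 e2 e3 f1 f2 f3 r : R)
  (I : R -> R -> R -> R) : Prop :=
  forall (q1 q2 q3 : R -> R) (t0 t1 : R), t0 <= t1 ->
    solution_on a1 a2 a3 e1 e2 e3 f1 f2 f3 r q1 q2 q3 t0 t1 ->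
    I (q1 t0) (q2 t0) (q3 t0) = I (q1 t1) (q2 t1) (q3 t1).

Definition nonconstant_on_box (I : R -> R -> R -> R) (r : R) : Prop :=
  exists x y z x' y' z', in_box r x y z /\ in_box r x' y' z' /\
    I x y z <> I x' y' z'.

From Stdlib Require Import Reals Lra Lia Classical.
From Coquelicot Require Import Coquelicot.
Open Scope R_scope.

(* Let P_m be the lowest-degree nonzero homogeneous part of the Taylor series of the first
   integral I at 0 (m >= 1 since I is nonconstant).  After the rescaling q = s w the system
   reads w_i' = w_i (f_i + s (beta w)_i); its solution from w(0) = u, built as a power series
   in t, stays within O(s) of the linear flow u_i e^(f_i t) up to a fixed time T.  As I is
   constant along q, comparing I(s u) and I(s w(T)) at order s^m gives
   P_m(w(T)) = P_m(u) + O(s), hence P_m(u e^(f T)) = P_m(u) for all small u.  Comparing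
   coefficients, each monomial u^n occurring in P_m satisfies e^((n.f) T) = 1, i.e.
   n.f = 0 with |n| = m. *)

Lemma PSeries_Series (a : nat -> R) x : PSeries a x = Series (fun k => a k * x ^ k).
Proof.
  rewrite PSeries_eq. apply Series_ext. intro k. rewrite pow_n_pow. apply Rmult_comm.
Qed.

Lemma Rabs_mult_le x y X Y : Rabs x <= X -> Rabs y <= Y -> Rabs (x * y) <= X * Y.
Proof. intros. rewrite Rabs_mult. apply Rmult_le_compat; auto using Rabs_pos. Qed.

Lemma Rabs_div_succ_le x y X Y k :
  0 <= X -> Rabs x <= X -> Rabs y <= INR (S k) * Y -> Rabs ((x + y) / INR (S k)) <= X + Y.
Proof.
  intros HX Hx Hy.
  assert (Hk : 1 <= INR (S k)) by (apply (le_INR 1); lia).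
  unfold Rdiv. rewrite Rabs_mult, Rabs_inv, (Rabs_right (INR (S k))) by lra.
  apply (Rmult_le_reg_r (INR (S k))); [lra|].
  rewrite Rmult_assoc, Rinv_l, Rmult_1_r by lra.
  pose proof (Rabs_triang x y). nra.
Qed.

Lemma Rmult_lt_of_le_div K s d :
  0 < s -> s <= d / (2 * (Rabs K + 1)) -> K * s < d.
Proof.
  intros Hs Hsd. pose proof (Rle_abs K). pose proof (Rabs_pos K).
  apply (Rmult_le_compat_r (2 * (Rabs K + 1))) in Hsd; [|lra].
  unfold Rdiv in Hsd. rewrite Rmult_assoc, Rinv_l, Rmult_1_r in Hsd by lra.
  nra.
Qed.

Lemma exp_pow x n : exp x ^ n = exp (INR n * x).
Proof.
  induction n as [|n IH].
  - simpl. now rewrite Rmult_0_l, exp_0.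
  - rewrite <- tech_pow_Rmult, IH, <- exp_plus, S_INR. f_equal. ring.
Qed.

Lemma exp_PSeries u f t :
  u * exp (f * t) = PSeries (fun k => u * f ^ k / INR (Factorial.fact k)) t.
Proof.
  rewrite exp_Reals, <- PSeries_scal, !PSeries_Series.
  apply Series_ext. intro k. unfold PS_scal.
  change (scal u (/ INR (Factorial.fact k))) with (u * / INR (Factorial.fact k)).
  rewrite Rpow_mult_distr. unfold Rdiv. ring.
Qed.

Lemma pseries_geometric_bound (a : nat -> R) c B t :
  1 <= B -> (forall k, Rabs (a k) <= c * B ^ k) -> Rabs t <= / (2 * B) ->
  Rbar_lt (Rabs t) (CV_radius a) /\ Rabs (PSeries a t) <= 2 * c.
Proof.
  intros HB Ha Ht.
  assert (Hc : 0 <= c)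
    by (pose proof (Ha 0%nat); pose proof (Rabs_pos (a 0%nat)); simpl in *; lra).
  assert (Hterm : forall k, Rabs (a k * t ^ k) <= c * (/ 2) ^ k).
  { intro k. rewrite Rabs_mult, <- RPow_abs.
    replace (/ 2) with (B * / (2 * B)) by (field; lra).
    rewrite Rpow_mult_distr, <- Rmult_assoc.
    apply Rmult_le_compat; auto using Rabs_pos, pow_le, pow_incr. }
  assert (Hgeom : is_series (fun k => c * (/ 2) ^ k) (2 * c)).
  { replace (2 * c) with (c * / (1 - / 2)) by (field; lra).
    apply (is_series_scal_l (V := R_NormedModule)), is_series_geom.
    rewrite Rabs_right; lra. }
  split.
  - assert (Hr : Rbar_le (/ B) (CV_radius a)).
    { apply (proj1 (CV_radius_bounded a)). exists c. intro k.
      rewrite Rabs_mult, <- RPow_abs, (Rabs_right (/ B)), pow_inv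
        by (apply Rle_ge, Rlt_le, Rinv_0_lt_compat; lra).
      apply (Rmult_le_reg_r (B ^ k)); [apply pow_lt; lra|].
      rewrite Rmult_assoc, Rinv_l, Rmult_1_r by (apply pow_nonzero; lra). apply Ha. }
    eapply Rbar_lt_le_trans; [|exact Hr]. simpl.
    eapply Rle_lt_trans; [exact Ht|]. apply Rinv_lt_contravar; nra.
  - assert (Habs : ex_series (fun k => Rabs (a k * t ^ k))).
    { apply (ex_series_le (K := R_AbsRing) (V := R_CompleteNormedModule))
        with (fun k => c * (/ 2) ^ k); [|eexists; exact Hgeom].
      intro k. change (Rabs (Rabs (a k * t ^ k)) <= c * (/ 2) ^ k).
      rewrite Rabs_Rabsolu. apply Hterm. }
    rewrite PSeries_Series, <- (is_series_unique _ _ Hgeom).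
    eapply Rle_trans; [apply Series_Rabs, Habs|].
    apply Series_le; [|eexists; exact Hgeom].
    intro k. split; [apply Rabs_pos|apply Hterm].
Qed.

Lemma Rabs_PS_mult_le (a a' : nat -> R) B k :
  0 <= B -> (forall l, (l <= k)%nat -> Rabs (a l) <= B ^ l) ->
  (forall l, (l <= k)%nat -> Rabs (a' l) <= B ^ l) ->
  Rabs (PS_mult a a' k) <= INR (S k) * B ^ k.
Proof.
  intros HB Ha Ha'. unfold PS_mult.
  eapply Rle_trans; [apply sum_f_R0_triangle|].
  rewrite Rmult_comm, <- sum_cte. apply sum_Rle. intros l Hl.
  rewrite Rabs_mult.
  replace (B ^ k) with (B ^ l * B ^ (k - l)) by (rewrite <- pow_add; f_equal; lia).
  apply Rmult_le_compat; try apply Rabs_pos; [apply Ha|apply Ha']; lia.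
Qed.

Lemma is_series_trivial_tail (P : nat -> R) l :
  is_series P l -> (forall n, (1 <= n)%nat -> P n = 0) -> l = P 0%nat.
Proof.
  intros HP Hz. rewrite <- (is_series_unique _ _ HP), Series_incr_1 by (eexists; exact HP).
  rewrite (Series_ext _ (fun k => 0 * P (S k))) by (intro n; rewrite Hz by lia; ring).
  now rewrite Series_scal_l, Rmult_0_l, Rplus_0_r.
Qed.

Lemma sum_f_R0_sparse (P : nat -> R) m : (1 <= m)%nat ->
  (forall n, (1 <= n < m)%nat -> P n = 0) -> sum_f_R0 P m = P 0%nat + P m.
Proof.
  intros Hm Hz.
  assert (Hlow : forall k, (k < m)%nat -> sum_f_R0 P k = P 0%nat).
  { induction k as [|k IH]; intro Hk; [reflexivity|].
    simpl. rewrite IH, (Hz (S k)) by lia. ring. }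
  destruct m as [|m]; [lia|]. simpl. now rewrite Hlow by lia.
Qed.

Lemma series_tail_le (P Pa : nat -> R) l m t :
  (1 <= m)%nat -> 0 < t <= 1 -> is_series P l -> ex_series Pa -> (forall n, 0 <= Pa n) ->
  (forall n, Rabs (P n) <= t ^ n * Pa n) -> (forall n, (1 <= n < m)%nat -> P n = 0) ->
  Rabs (l - P 0%nat - P m) <= t ^ S m * Series Pa.
Proof.
  intros Hm Ht HP HPa Hpos Hbound Hz.
  assert (Htail : l - P 0%nat - P m = Series (fun k => P (S m + k)%nat)).
  { rewrite <- (is_series_unique _ _ HP), (Series_incr_n P (S m)) by (lia || (eexists; exact HP)).
    simpl pred. rewrite sum_f_R0_sparse by auto. ring. }
  assert (Htail_le : forall k, Rabs (P (S m + k)%nat) <= Pa (S m + k)%nat * t ^ S m).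
  { intro k. eapply Rle_trans; [apply Hbound|].
    rewrite (Rmult_comm (Pa _)), pow_add. apply Rmult_le_compat_r; [apply Hpos|].
    rewrite <- (Rmult_1_r (t ^ S m)) at 2. apply Rmult_le_compat_l; [apply pow_le; lra|].
    rewrite <- (pow1 k). apply pow_incr. lra. }
  assert (HPa_tail : ex_series (fun k => Pa (S m + k)%nat * t ^ S m))
    by (apply ex_series_scal_r, ex_series_incr_n; auto).
  rewrite Htail. eapply Rle_trans; [apply Series_Rabs|].
  { eapply (ex_series_le (K := R_AbsRing) (V := R_CompleteNormedModule)); [|exact HPa_tail].
    intro k. change (Rabs (Rabs (P (S m + k)%nat)) <= Pa (S m + k)%nat * t ^ S m).
    rewrite Rabs_Rabsolu. apply Htail_le. }
  eapply Rle_trans; [apply Series_le; [|exact HPa_tail]|].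
  - intro k. split; [apply Rabs_pos|apply Htail_le].
  - rewrite Series_scal_r, Rmult_comm. apply Rmult_le_compat_l; [apply pow_le; lra|].
    rewrite (Series_incr_n Pa (S m)) by (auto; lia).
    assert (0 <= sum_f_R0 Pa (pred (S m))) by (apply cond_pos_sum; auto). lra.
Qed.

Ltac pose_Rabs_pos :=
  repeat match goal with
  | |- context [Rabs ?x] =>
      lazymatch goal with
      | _ : 0 <= Rabs x |- _ => fail
      | _ => pose proof (Rabs_pos x)
      end
  end.

Lemma continuous_Rplus {U : UniformSpace} (g h : U -> R) p :
  continuous g p -> continuous h p -> continuous (fun q => g q + h q) p.
Proof. apply (continuous_plus (K := R_AbsRing) (V := R_NormedModule)). Qed.

Lemma continuous_Rmult {U : UniformSpace} (g h : U -> R) p :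
  continuous g p -> continuous h p -> continuous (fun q => g q * h q) p.
Proof. apply (continuous_mult (K := R_AbsRing)). Qed.

Lemma continuous_pow {U : UniformSpace} (g : U -> R) n p :
  continuous g p -> continuous (fun q => g q ^ n) p.
Proof.
  intro Hg. induction n as [|n IH]; simpl.
  - apply continuous_const.
  - now apply continuous_Rmult.
Qed.

Lemma continuous_sum_f_R0 {U : UniformSpace} (g : nat -> U -> R) n p :
  (forall i, continuous (g i) p) -> continuous (fun q => sum_f_R0 (fun i => g i q) n) p.
Proof.
  intro Hg. induction n as [|n IH]; simpl; [apply Hg|].
  now apply continuous_Rplus.
Qed.

Lemma continuous_punctured_zero (g : R -> R) del :
  0 < del -> continuous g 0 -> (forall x, 0 < Rabs x < del -> g x = 0) -> g 0 = 0.
Proof.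
  intros Hdel Hc Hz.
  destruct (Req_dec (g 0) 0) as [|Hne]; auto. exfalso.
  destruct (proj1 (filterlim_locally _ _) Hc (mkposreal _ (Rabs_pos_lt _ Hne))) as [d Hd].
  pose proof (cond_pos d).
  set (x := Rmin del d / 2).
  assert (Hx : 0 < x /\ x < del /\ x < d)
    by (unfold x; pose proof (Rmin_l del d); pose proof (Rmin_r del d);
        pose proof (Rmin_pos del d Hdel (cond_pos d)); lra).
  assert (Hball : Rabs (g x - g 0) < Rabs (g 0)).
  { apply (Hd x). change (Rabs (x - 0) < d). rewrite Rminus_0_r, Rabs_right; lra. }
  rewrite Hz, Rminus_0_l, Rabs_Ropp in Hball by (rewrite Rabs_right; lra). lra.
Qed.

Lemma continuous_poly (a : nat -> R) n x :
  continuous (fun x => sum_f_R0 (fun i => a i * x ^ i) n) x.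
Proof.
  apply continuous_sum_f_R0. intro i.
  apply continuous_Rmult; [apply continuous_const|apply continuous_pow, continuous_id].
Qed.

Lemma poly_coefs_zero n : forall (a : nat -> R) del, 0 < del ->
  (forall x, 0 < Rabs x < del -> sum_f_R0 (fun i => a i * x ^ i) n = 0) ->
  forall i, (i <= n)%nat -> a i = 0.
Proof.
  induction n as [|n IH]; intros a del Hdel Hz i Hi.
  - replace i with 0%nat by lia. rewrite <- (Rmult_1_r (a 0%nat)).
    apply (Hz (del / 2)). rewrite Rabs_right; lra.
  - assert (Hdec : forall x, sum_f_R0 (fun i => a i * x ^ i) (S n)
                             = a 0%nat + x * sum_f_R0 (fun i => a (S i) * x ^ i) n).
    { intro x. rewrite decomp_sum, scal_sum by lia. simpl pred. f_equal; [ring|].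
      apply sum_eq. intros k Hk. simpl. ring. }
    assert (Ha0 : a 0%nat = 0).
    { replace (a 0%nat) with (sum_f_R0 (fun i => a i * 0 ^ i) (S n)) by (rewrite Hdec; ring).
      apply (continuous_punctured_zero (fun x => sum_f_R0 (fun i => a i * x ^ i) (S n)) del);
        auto using continuous_poly. }
    destruct i as [|i]; [exact Ha0|].
    apply (IH (fun i => a (S i)) del Hdel); [|lia].
    intros x Hx. apply (Rmult_eq_reg_l x); [|intros ->; rewrite Rabs_R0 in Hx; lra].
    specialize (Hz x Hx). rewrite Hdec, Ha0 in Hz. lra.
Qed.

(** * Series solutions of Lotka-Volterra systems *)

Section LotkaVolterraSeries.

Variables (F U : nat -> R) (b : nat -> nat -> R) (s : R).

Definition interaction (g : nat -> R) (i : nat) : R :=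
  b i 1%nat * g 1%nat + b i 2%nat * g 2%nat + b i 3%nat * g 3%nat.

Definition lv_next (h : nat -> nat -> R) (k i : nat) : R :=
  (F i * h k i + s * interaction (fun j => PS_mult (fun l => h l i) (fun l => h l j) k) i)
  / INR (S k).

(* [lv_table k l i], for [l <= k], is the coefficient of [t ^ l] in the series solution
   [w_i] of [w_i' = w_i (F_i + s (b w)_i)], [w(0) = U]; each new coefficient needs all
   previous ones, hence the whole table is carried along. *)
Fixpoint lv_table (k : nat) : nat -> nat -> R :=
  match k with
  | O => fun _ i => U i
  | S k' => fun l i => if (l <=? k')%nat then lv_table k' l i else lv_next (lv_table k') k' i
  end.

Definition lv_coef (k i : nat) : R := lv_table k k i.

Lemma lv_next_ext h h' k i :
  (forall l j, (l <= k)%nat -> h l j = h' l j) -> lv_next h k i = lv_next h' k i.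
Proof.
  intro E.
  assert (Hmult : forall j, PS_mult (fun l => h l i) (fun l => h l j) k
                          = PS_mult (fun l => h' l i) (fun l => h' l j) k).
  { intro j. apply sum_eq. intros l Hl. rewrite !E by lia. reflexivity. }
  unfold lv_next, interaction. rewrite E, !Hmult by lia. reflexivity.
Qed.

Lemma lv_table_stable k l i : (l <= k)%nat -> lv_table k l i = lv_coef l i.
Proof.
  induction k as [|k IH]; intro Hl.
  - replace l with 0%nat by lia. reflexivity.
  - cbn [lv_table]. destruct (Nat.leb_spec l k) as [Hlk|Hlk]; [now apply IH|].
    replace l with (S k) by lia. unfold lv_coef. cbn [lv_table].
    rewrite (proj2 (Nat.leb_gt (S k) k)) by lia. reflexivity.
Qed.

Lemma lv_coef_0 i : lv_coef 0 i = U i.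
Proof. reflexivity. Qed.

Lemma lv_coef_S k i : lv_coef (S k) i = lv_next lv_coef k i.
Proof.
  unfold lv_coef at 1. cbn [lv_table]. rewrite (proj2 (Nat.leb_gt (S k) k)) by lia.
  apply lv_next_ext. intros l j Hl. now apply lv_table_stable.
Qed.

Variable M : R.
Hypothesis F_le : forall i, Rabs (F i) <= M.
Hypothesis b_le : forall i j, Rabs (b i j) <= M.
Hypothesis U_le : forall i, Rabs (U i) <= 1.
Hypothesis s_range : 0 <= s <= 1.

Lemma bound_nonneg : 0 <= M.
Proof. pose proof (F_le 0) as H. pose proof (Rabs_pos (F 0%nat)). lra. Qed.

Lemma Rabs_interaction_le g i X :
  (forall j, Rabs (g j) <= X) -> Rabs (interaction g i) <= 3 * (M * X).
Proof.
  intro Hg.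
  assert (H : forall j, Rabs (b i j * g j) <= M * X) by (intro j; apply Rabs_mult_le; auto).
  unfold interaction. eapply Rle_trans; [apply Rabs_triang|].
  pose proof (Rabs_triang (b i 1%nat * g 1%nat) (b i 2%nat * g 2%nat)).
  pose proof (H 1%nat). pose proof (H 2%nat). pose proof (H 3%nat). lra.
Qed.

Lemma Rabs_lv_interaction_le k i :
  (forall l j, (l <= k)%nat -> Rabs (lv_coef l j) <= (4 * M + 1) ^ l) ->
  Rabs (s * interaction (fun j => PS_mult (fun l => lv_coef l i) (fun l => lv_coef l j) k) i)
  <= INR (S k) * (s * (3 * M * (4 * M + 1) ^ k)).
Proof.
  intro Hcoef. pose proof bound_nonneg.
  rewrite Rabs_mult, (Rabs_right s) by lra.
  replace (INR (S k) * (s * (3 * M * (4 * M + 1) ^ k)))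
    with (s * (3 * (M * (INR (S k) * (4 * M + 1) ^ k)))) by ring.
  apply Rmult_le_compat_l; [lra|]. apply Rabs_interaction_le. intro j.
  apply Rabs_PS_mult_le; [lra| |]; intros l Hl; now apply Hcoef.
Qed.

Lemma lv_coef_bound k i : Rabs (lv_coef k i) <= (4 * M + 1) ^ k.
Proof.
  revert i. induction k as [k IH] using (well_founded_induction Wf_nat.lt_wf). intro i.
  pose proof bound_nonneg. destruct k as [|k].
  - rewrite lv_coef_0. apply U_le.
  - assert (Hk : forall l j, (l <= k)%nat -> Rabs (lv_coef l j) <= (4 * M + 1) ^ l)
      by (intros l j Hl; apply IH; lia).
    assert (HBk : 0 <= (4 * M + 1) ^ k) by (apply pow_le; lra).
    rewrite lv_coef_S. unfold lv_next.
    eapply Rle_trans.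
    { apply (Rabs_div_succ_le _ _ (M * (4 * M + 1) ^ k)).
      - apply Rmult_le_pos; lra.
      - apply Rabs_mult_le; auto.
      - apply Rabs_lv_interaction_le, Hk. }
    assert (0 <= M * (4 * M + 1) ^ k) by (apply Rmult_le_pos; lra).
    assert (s * (M * (4 * M + 1) ^ k) <= M * (4 * M + 1) ^ k)
      by (rewrite <- (Rmult_1_l (M * _)) at 2; apply Rmult_le_compat_r; lra).
    simpl. nra.
Qed.

Lemma lv_coef_near_exp k i :
  Rabs (lv_coef k i - U i * F i ^ k / INR (Factorial.fact k)) <= s * (4 * M + 1) ^ k.
Proof.
  pose proof bound_nonneg. induction k as [|k IH].
  - rewrite lv_coef_0. simpl. replace (U i - U i * 1 / 1) with 0 by field.
    rewrite Rabs_R0. lra.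
  - assert (HBk : 0 <= (4 * M + 1) ^ k) by (apply pow_le; lra).
    assert (Hk : 0 < INR (Factorial.fact k)) by apply (lt_0_INR _ (Factorial.lt_O_fact k)).
    rewrite lv_coef_S. unfold lv_next.
    match goal with |- Rabs ((F i * _ + ?y) / _ - _) <= _ =>
      replace ((F i * lv_coef k i + y) / INR (S k) - U i * F i ^ S k / INR (Factorial.fact (S k)))
        with ((F i * (lv_coef k i - U i * F i ^ k / INR (Factorial.fact k)) + y) / INR (S k))
    end.
    2:{ rewrite fact_simpl, mult_INR. simpl pow. field. split; [lra|apply not_0_INR; lia]. }
    eapply Rle_trans.
    { apply (Rabs_div_succ_le _ _ (M * (s * (4 * M + 1) ^ k))).
      - apply Rmult_le_pos; [lra|apply Rmult_le_pos; lra].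
      - apply Rabs_mult_le; auto.
      - apply Rabs_lv_interaction_le. intros. apply lv_coef_bound. }
    simpl. nra.
Qed.

Lemma ex_pseries_interaction (h : nat -> nat -> R) i x :
  (forall j, ex_pseries (h j) x) -> ex_pseries (fun k => interaction (fun j => h j k) i) x.
Proof.
  intro Hh.
  apply (ex_pseries_plus
           (PS_plus (PS_scal (b i 1%nat) (h 1%nat)) (PS_scal (b i 2%nat) (h 2%nat)))
           (PS_scal (b i 3%nat) (h 3%nat)));
    [apply ex_pseries_plus|]; apply ex_pseries_scal; auto using Rmult_comm.
Qed.

Lemma PSeries_interaction (h : nat -> nat -> R) i x :
  (forall j, ex_pseries (h j) x) ->
  PSeries (fun k => interaction (fun j => h j k) i) x = interaction (fun j => PSeries (h j) x) i.
Proof.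
  intro Hh.
  assert (Hs : forall j, ex_pseries (PS_scal (b i j) (h j)) x)
    by (intro j; apply ex_pseries_scal; [apply Rmult_comm|apply Hh]).
  unfold interaction. rewrite <- !PSeries_scal, <- !PSeries_plus;
    auto using ex_pseries_plus.
Qed.

Definition lv_sol (i : nat) (t : R) : R := PSeries (fun k => lv_coef k i) t.

Lemma lv_sol_0 i : lv_sol i 0 = U i.
Proof. unfold lv_sol. now rewrite PSeries_0. Qed.

Variable t : R.
Hypothesis t_small : Rabs t <= / (2 * (4 * M + 1)).

Lemma lv_sol_radius_bound i :
  Rbar_lt (Rabs t) (CV_radius (fun k => lv_coef k i)) /\ Rabs (lv_sol i t) <= 2.
Proof.
  pose proof bound_nonneg. rewrite <- (Rmult_1_r 2).
  apply (pseries_geometric_bound _ _ (4 * M + 1)); [lra| |exact t_small].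
  intro k. rewrite Rmult_1_l. apply lv_coef_bound.
Qed.

Lemma lv_sol_near_exp i : Rabs (lv_sol i t - U i * exp (F i * t)) <= 2 * s.
Proof.
  pose proof bound_nonneg.
  set (a := fun k => lv_coef k i).
  set (d := fun k => a k - U i * F i ^ k / INR (Factorial.fact k)).
  destruct (pseries_geometric_bound d s (4 * M + 1) t) as [Hd Hbd];
    [lra|intro k; apply lv_coef_near_exp|exact t_small|].
  rewrite exp_PSeries, (PSeries_ext _ (PS_minus a d)).
  2:{ intro k. unfold PS_minus, PS_plus, PS_opp, d.
      change (plus ?x (opp ?y)) with (x - y). ring. }
  rewrite PSeries_minus by (apply CV_radius_inside; auto; apply lv_sol_radius_bound).
  unfold lv_sol. fold a.
  replace (PSeries a t - (PSeries a t - PSeries d t)) with (PSeries d t) by ring. exact Hbd.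
Qed.

Lemma lv_sol_derive i :
  is_derive (lv_sol i) t (lv_sol i t * (F i + s * interaction (fun j => lv_sol j t) i)).
Proof.
  set (a := fun j k => lv_coef k j).
  assert (Hr : forall j, Rbar_lt (Rabs t) (CV_radius (a j)))
    by (intro j; apply lv_sol_radius_bound).
  assert (Hder : forall k, PS_derive (a i) k =
    PS_plus (PS_scal (F i) (a i))
            (PS_scal s (fun k => interaction (fun j => PS_mult (a i) (a j) k) i)) k).
  { intro k. unfold PS_derive, PS_plus, PS_scal, a. rewrite lv_coef_S. unfold lv_next.
    change (plus ?x ?y) with (x + y). change (scal ?x ?y) with (x * y).
    field. apply not_0_INR. lia. }
  replace (lv_sol i t * (F i + s * interaction (fun j => lv_sol j t) i))
    with (PSeries (PS_derive (a i)) t).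
  { apply is_derive_PSeries, Hr. }
  rewrite (PSeries_ext _ _ _ Hder), PSeries_plus, !PSeries_scal, PSeries_interaction.
  - unfold interaction. rewrite !PSeries_mult by apply Hr. unfold lv_sol, a. ring.
  - intro j. apply ex_pseries_mult; apply Hr.
  - apply ex_pseries_scal; [apply Rmult_comm|]. apply CV_radius_inside, Hr.
  - apply ex_pseries_scal; [apply Rmult_comm|].
    apply ex_pseries_interaction. intro j. apply ex_pseries_mult; apply Hr.
Qed.

End LotkaVolterraSeries.

Definition sel (x1 x2 x3 : R) (i : nat) : R :=
  match i with 1%nat => x1 | 2%nat => x2 | _ => x3 end.

Lemma Rabs_sel_le x1 x2 x3 X i :
  Rabs x1 <= X -> Rabs x2 <= X -> Rabs x3 <= X -> Rabs (sel x1 x2 x3 i) <= X.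
Proof. intros. now destruct i as [|[|[|]]]. Qed.

Section CournotFlow.

Variables a1 a2 a3 e1 e2 e3 f1 f2 f3 : R.

Definition param_bound : R :=
  Rabs a1 + Rabs a2 + Rabs a3 + Rabs e1 + Rabs e2 + Rabs e3 + Rabs f1 + Rabs f2 + Rabs f3.

Definition flow_time : R := / (2 * (4 * param_bound + 1)).

Lemma Rabs_sel_f_le i : Rabs (sel f1 f2 f3 i) <= param_bound.
Proof. unfold param_bound. pose_Rabs_pos. apply Rabs_sel_le; lra. Qed.

Lemma Rabs_beta_le i j : Rabs (beta a1 a2 a3 e1 e2 e3 i j) <= param_bound.
Proof.
  unfold param_bound. pose_Rabs_pos.
  destruct i as [|[|[|[|]]]]; try (simpl; rewrite Rabs_R0; lra);
    destruct j as [|[|[|[|]]]]; simpl; rewrite Rabs_Ropp; lra.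
Qed.

Lemma flow_time_pos : 0 < flow_time.
Proof. unfold flow_time, param_bound. pose_Rabs_pos. apply Rinv_0_lt_compat. lra. Qed.

Definition rescaled_flow (s u1 u2 u3 : R) (i : nat) (t : R) : R :=
  lv_sol (sel f1 f2 f3) (sel u1 u2 u3) (beta a1 a2 a3 e1 e2 e3) s i t.

Lemma rescaled_flow_0 s u1 u2 u3 i : rescaled_flow s u1 u2 u3 i 0 = sel u1 u2 u3 i.
Proof. apply lv_sol_0. Qed.

Variables s u1 u2 u3 : R.
Hypothesis s_range : 0 < s <= 1.
Hypothesis u_le : Rabs u1 <= 1 /\ Rabs u2 <= 1 /\ Rabs u3 <= 1.

Lemma rescaled_flow_spec i t : 0 <= t <= flow_time ->
  Rabs (rescaled_flow s u1 u2 u3 i t) <= 2 /\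
  Rabs (rescaled_flow s u1 u2 u3 i t - sel u1 u2 u3 i * exp (sel f1 f2 f3 i * t)) <= 2 * s /\
  is_derive (rescaled_flow s u1 u2 u3 i) t
    (rescaled_flow s u1 u2 u3 i t *
     (sel f1 f2 f3 i +
      s * interaction (beta a1 a2 a3 e1 e2 e3) (fun j => rescaled_flow s u1 u2 u3 j t) i)).
Proof.
  intro Ht.
  assert (Habs : Rabs t <= / (2 * (4 * param_bound + 1)))
    by (rewrite Rabs_right; unfold flow_time in Ht; lra).
  destruct u_le as [H1 [H2 H3]].
  assert (HU : forall j, Rabs (sel u1 u2 u3 j) <= 1) by (intro; now apply Rabs_sel_le).
  assert (Hs : 0 <= s <= 1) by lra.
  unfold rescaled_flow. split; [|split].
  - apply (lv_sol_radius_bound _ _ _ _ param_bound); auto using Rabs_sel_f_le, Rabs_beta_le.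
  - apply (lv_sol_near_exp _ _ _ _ param_bound); auto using Rabs_sel_f_le, Rabs_beta_le.
  - apply (lv_sol_derive _ _ _ _ param_bound); auto using Rabs_sel_f_le, Rabs_beta_le.
Qed.

Lemma rescaled_flow_solution r : 2 * s < r ->
  solution_on a1 a2 a3 e1 e2 e3 f1 f2 f3 r
    (fun t => s * rescaled_flow s u1 u2 u3 1 t)
    (fun t => s * rescaled_flow s u1 u2 u3 2 t)
    (fun t => s * rescaled_flow s u1 u2 u3 3 t) 0 flow_time.
Proof.
  intros Hr t Ht.
  assert (Hbox : forall i, Rabs (s * rescaled_flow s u1 u2 u3 i t) < r).
  { intro i. rewrite Rabs_mult, Rabs_right by lra.
    pose proof (proj1 (rescaled_flow_spec i t Ht)). nra. }
  assert (Hder : forall i, (i = 1 \/ i = 2 \/ i = 3)%nat ->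
    is_derive (fun t => s * rescaled_flow s u1 u2 u3 i t) t
      (field a1 a2 a3 e1 e2 e3 (sel f1 f2 f3 i) i (s * rescaled_flow s u1 u2 u3 1 t)
         (s * rescaled_flow s u1 u2 u3 2 t) (s * rescaled_flow s u1 u2 u3 3 t))).
  { intros i Hi.
    replace (field _ _ _ _ _ _ _ _ _ _ _) with (s * (rescaled_flow s u1 u2 u3 i t *
      (sel f1 f2 f3 i +
       s * interaction (beta a1 a2 a3 e1 e2 e3) (fun j => rescaled_flow s u1 u2 u3 j t) i))).
    - apply is_derive_scal, rescaled_flow_spec, Ht.
    - unfold field, interaction. destruct Hi as [ -> | [ -> | -> ] ]; simpl; ring. }
  repeat split; try apply Hbox; apply Hder; auto.
Qed.

End CournotFlow.

(** * Homogeneous parts of a triple power series *)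

Definition homog_part_zero (c : nat -> nat -> nat -> R) (n : nat) : Prop :=
  forall i j, (i <= n)%nat -> (j <= n - i)%nat -> c i j (n - i - j)%nat = 0.

Lemma psum3_homog_part_zero c x y z n : homog_part_zero c n -> psum3 c x y z n = 0.
Proof.
  intro H. unfold psum3. apply sum_eq_R0. intros i Hi. apply sum_eq_R0. intros j Hj.
  rewrite H by auto. ring.
Qed.

Lemma psum3_0 c x y z : psum3 c x y z 0 = c 0%nat 0%nat 0%nat.
Proof. unfold psum3. simpl. ring. Qed.

Lemma psum3_scale c s x y z n :
  psum3 c (s * x) (s * y) (s * z) n = s ^ n * psum3 c x y z n.
Proof.
  unfold psum3. rewrite scal_sum. apply sum_eq. intros i Hi.
  rewrite (Rmult_comm (sum_f_R0 _ _)), scal_sum. apply sum_eq. intros j Hj.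
  rewrite !Rpow_mult_distr.
  replace (s ^ n) with (s ^ i * s ^ j * s ^ (n - i - j)) by (rewrite <- !pow_add; f_equal; lia).
  ring.
Qed.

Lemma psum3_minus c c' x y z n :
  psum3 (fun i j k => c i j k - c' i j k) x y z n = psum3 c x y z n - psum3 c' x y z n.
Proof.
  unfold psum3. rewrite <- minus_sum. apply sum_eq. intros i Hi.
  rewrite <- minus_sum. apply sum_eq. intros j Hj. ring.
Qed.

Lemma psum3_exp_scale c g1 g2 g3 x y z n :
  psum3 c (x * exp g1) (y * exp g2) (z * exp g3) n
  = psum3 (fun i j k => c i j k * exp (INR i * g1 + INR j * g2 + INR k * g3)) x y z n.
Proof.
  unfold psum3. apply sum_eq. intros i Hi. apply sum_eq. intros j Hj.
  rewrite !Rpow_mult_distr, !exp_plus, !exp_pow. ring.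
Qed.

Lemma psum3_abs_nonneg c x y z n : 0 <= psum3_abs c x y z n.
Proof.
  unfold psum3_abs. apply cond_pos_sum. intro i. apply cond_pos_sum. intro j. apply Rabs_pos.
Qed.

Lemma Rabs_psum3_le c x y z rho t n : 0 <= t -> 0 <= rho ->
  Rabs x <= t * rho -> Rabs y <= t * rho -> Rabs z <= t * rho ->
  Rabs (psum3 c x y z n) <= t ^ n * psum3_abs c rho rho rho n.
Proof.
  intros Ht Hr Hx Hy Hz.
  assert (Hpow : forall w l, Rabs w <= t * rho -> Rabs (w ^ l) <= t ^ l * rho ^ l).
  { intros w l Hw. rewrite <- RPow_abs, <- Rpow_mult_distr.
    apply pow_incr. split; [apply Rabs_pos|exact Hw]. }
  unfold psum3, psum3_abs. rewrite scal_sum.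
  eapply Rle_trans; [apply sum_f_R0_triangle|]. apply sum_Rle. intros i Hi.
  rewrite (Rmult_comm (sum_f_R0 _ _)), scal_sum.
  eapply Rle_trans; [apply sum_f_R0_triangle|]. apply sum_Rle. intros j Hj.
  set (k := (n - i - j)%nat).
  replace (t ^ n) with (t ^ i * t ^ j * t ^ k) by (rewrite <- !pow_add; f_equal; unfold k; lia).
  rewrite !Rabs_mult, !(Rabs_right (rho ^ _)) by (apply Rle_ge, pow_le, Hr).
  replace (Rabs (c i j k) * rho ^ i * rho ^ j * rho ^ k * (t ^ i * t ^ j * t ^ k))
    with (Rabs (c i j k) * (t ^ i * rho ^ i) * (t ^ j * rho ^ j) * (t ^ k * rho ^ k)) by ring.
  repeat apply Rmult_le_compat; auto using Rabs_pos, Rmult_le_pos, Rle_refl.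
Qed.

Definition uncurry3 (P : R -> R -> R -> R) (p : R * R * R) : R :=
  P (fst (fst p)) (snd (fst p)) (snd p).

Lemma continuous_psum3 c n p : continuous (uncurry3 (fun x y z => psum3 c x y z n)) p.
Proof.
  destruct p as [[x y] z].
  assert (Hx : continuous (fun p : R * R * R => fst (fst p)) (x, y, z))
    by (apply (continuous_comp fst fst); [apply continuous_fst|apply continuous_fst]).
  assert (Hy : continuous (fun p : R * R * R => snd (fst p)) (x, y, z))
    by (apply (continuous_comp fst snd); [apply continuous_fst|apply continuous_snd]).
  assert (Hz : continuous (fun p : R * R * R => snd p) (x, y, z)) by apply continuous_snd.
  unfold uncurry3, psum3.
  apply continuous_sum_f_R0. intro i. apply continuous_sum_f_R0. intro j.
  repeat apply continuous_Rmult; auto using continuous_const, continuous_pow.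
Qed.

Lemma continuous3_eq_of_approx (P : R -> R -> R -> R) y1 y2 y3 A Kx KP s0 :
  continuous (uncurry3 P) (y1, y2, y3) -> 0 < s0 ->
  (forall s, 0 < s <= s0 -> exists x1 x2 x3,
     Rabs (x1 - y1) <= Kx * s /\ Rabs (x2 - y2) <= Kx * s /\ Rabs (x3 - y3) <= Kx * s /\
     Rabs (P x1 x2 x3 - A) <= KP * s) ->
  P y1 y2 y3 = A.
Proof.
  intros Hc Hs0 Happrox. apply Rminus_diag_uniq.
  destruct (Req_dec (P y1 y2 y3 - A) 0) as [|Hne]; auto. exfalso.
  assert (Heps : 0 < Rabs (P y1 y2 y3 - A) / 2) by (pose proof (Rabs_pos_lt _ Hne); lra).
  destruct (proj1 (filterlim_locally _ _) Hc (mkposreal _ Heps)) as [del Hdel].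
  pose proof (cond_pos del) as Hdel0.
  set (eps := Rabs (P y1 y2 y3 - A) / 2) in *.
  set (s := Rmin s0 (Rmin (del / (2 * (Rabs Kx + 1))) (eps / (2 * (Rabs KP + 1))))).
  assert (Hs : 0 < s).
  { unfold s. pose_Rabs_pos. repeat apply Rmin_pos; try apply Rdiv_lt_0_compat; lra. }
  assert (Hsx : s <= del / (2 * (Rabs Kx + 1)))
    by (unfold s; eapply Rle_trans; [apply Rmin_r|apply Rmin_l]).
  assert (HsP : s <= eps / (2 * (Rabs KP + 1)))
    by (unfold s; eapply Rle_trans; [apply Rmin_r|apply Rmin_r]).
  destruct (Happrox s) as [x1 [x2 [x3 [H1 [H2 [H3 HP]]]]]]; [split; [lra|apply Rmin_l]|].
  pose proof (Rmult_lt_of_le_div Kx s del Hs Hsx).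
  pose proof (Rmult_lt_of_le_div KP s eps Hs HsP).
  assert (Hball : Rabs (P x1 x2 x3 - P y1 y2 y3) < eps).
  { apply (Hdel (x1, x2, x3)). repeat split; simpl;
      [change (Rabs (x1 - y1) < del)|change (Rabs (x2 - y2) < del)|change (Rabs (x3 - y3) < del)];
      lra. }
  pose proof (Rabs_triang (P y1 y2 y3 - P x1 x2 x3) (P x1 x2 x3 - A)).
  rewrite Rabs_minus_sym in Hball.
  replace (P y1 y2 y3 - P x1 x2 x3 + (P x1 x2 x3 - A)) with (P y1 y2 y3 - A) in * by ring.
  unfold eps in *. lra.
Qed.

Lemma homog_part_zero_of_psum3 c m del : 0 < del ->
  (forall x y z, Rabs x < del -> Rabs y < del -> Rabs z < del -> psum3 c x y z m = 0) ->
  homog_part_zero c m.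
Proof.
  intros Hdel H.
  assert (Hx : forall y z, Rabs y < del -> Rabs z < del -> forall i, (i <= m)%nat ->
     sum_f_R0 (fun j => c i j (m - i - j)%nat * y ^ j * z ^ (m - i - j)) (m - i) = 0).
  { intros y z Hy Hz. apply (poly_coefs_zero m _ del Hdel). intros x Hx.
    rewrite <- (H x y z ltac:(lra) Hy Hz). unfold psum3. apply sum_eq. intros i Hi.
    rewrite Rmult_comm, scal_sum. apply sum_eq. intros j Hj. ring. }
  intros i j Hi Hj.
  set (z := del / 2).
  assert (Hz : Rabs z < del) by (unfold z; rewrite Rabs_right; lra).
  assert (Hy : c i j (m - i - j)%nat * z ^ (m - i - j) = 0).
  { apply (poly_coefs_zero (m - i) (fun j => c i j (m - i - j)%nat * z ^ (m - i - j)) del Hdel);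
      [|exact Hj].
    intros y Hy. rewrite <- (Hx y z ltac:(lra) Hz i Hi). apply sum_eq. intros k Hk. ring. }
  apply Rmult_integral in Hy as [Hy|Hy]; [exact Hy|].
  exfalso. apply (pow_nonzero z (m - i - j)); [unfold z; lra|exact Hy].
Qed.

Lemma lowest_nonzero_part c (I : R -> R -> R -> R) r :
  (forall x y z, in_box r x y z -> is_series (psum3 c x y z) (I x y z)) ->
  nonconstant_on_box I r ->
  exists m, (1 <= m)%nat /\ ~ homog_part_zero c m /\
    forall n, (1 <= n < m)%nat -> homog_part_zero c n.
Proof.
  intros HI [x0 [y0 [z0 [x1 [y1 [z1 [Hb0 [Hb1 Hne]]]]]]]].
  assert (Hex : exists n, (1 <= n)%nat /\ ~ homog_part_zero c n).
  { apply NNPP. intro Hall.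
    assert (Hconst : forall x y z, in_box r x y z -> I x y z = c 0%nat 0%nat 0%nat).
    { intros x y z Hb. rewrite (is_series_trivial_tail _ _ (HI x y z Hb)), psum3_0; [reflexivity|].
      intros n Hn. apply psum3_homog_part_zero. apply NNPP. intro Hnz. apply Hall. eauto. }
    apply Hne. now rewrite !Hconst. }
  destruct (Wf_nat.dec_inh_nat_subset_has_unique_least_element _ (fun n => classic _) Hex)
    as [m [[[Hm Hnz] Hleast] _]].
  exists m. split; [|split]; auto.
  intros n Hn. apply NNPP. intro Hnz'. specialize (Hleast n (conj (proj1 Hn) Hnz')). lia.
Qed.

(** * The lowest-order part of a first integral *)

Section LowestPartInvariance.

Variables a1 a2 a3 e1 e2 e3 f1 f2 f3 : R.
Variables (I : R -> R -> R -> R) (r : R) (c : nat -> nat -> nat -> R) (m : nat).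
Hypothesis r_pos : 0 < r.
Hypothesis I_series : forall x y z, in_box r x y z ->
  ex_series (psum3_abs c x y z) /\ is_series (psum3 c x y z) (I x y z).
Hypothesis I_first_integral : first_integral_on_box a1 a2 a3 e1 e2 e3 f1 f2 f3 r I.
Hypothesis m_pos : (1 <= m)%nat.
Hypothesis lower_parts_zero : forall n, (1 <= n < m)%nat -> homog_part_zero c n.

Let T := flow_time a1 a2 a3 e1 e2 e3 f1 f2 f3.
Let w s u1 u2 u3 i := rescaled_flow a1 a2 a3 e1 e2 e3 f1 f2 f3 s u1 u2 u3 i T.
Let majorant := Series (psum3_abs c (r / 2) (r / 2) (r / 2)).

Let T_range : 0 <= T <= T.
Proof. unfold T. pose proof (flow_time_pos a1 a2 a3 e1 e2 e3 f1 f2 f3). lra. Qed.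

Lemma lowest_part_approx t x y z : 0 < t <= 1 ->
  Rabs x <= t * (r / 2) -> Rabs y <= t * (r / 2) -> Rabs z <= t * (r / 2) ->
  Rabs (I x y z - c 0%nat 0%nat 0%nat - psum3 c x y z m) <= t ^ S m * majorant.
Proof.
  intros Ht Hx Hy Hz. rewrite <- (psum3_0 c x y z).
  apply series_tail_le; auto.
  - apply I_series. unfold in_box. nra.
  - apply I_series. unfold in_box. rewrite Rabs_right; lra.
  - intro n. apply psum3_abs_nonneg.
  - intro n. apply Rabs_psum3_le; lra.
  - intros n Hn. now apply psum3_homog_part_zero, lower_parts_zero.
Qed.

Lemma lowest_part_flow_estimate s u1 u2 u3 : 0 < s <= 1 -> s <= r / 4 ->
  Rabs u1 <= 1 -> Rabs u2 <= 1 -> Rabs u3 <= 1 ->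
  Rabs (psum3 c (w s u1 u2 u3 1) (w s u1 u2 u3 2) (w s u1 u2 u3 3) m - psum3 c u1 u2 u3 m)
  <= 2 * (4 / r) ^ S m * majorant * s.
Proof.
  intros Hs Hsr H1 H2 H3.
  assert (Hu : Rabs u1 <= 1 /\ Rabs u2 <= 1 /\ Rabs u3 <= 1) by auto.
  assert (Hconst : I (s * u1) (s * u2) (s * u3)
                   = I (s * w s u1 u2 u3 1) (s * w s u1 u2 u3 2) (s * w s u1 u2 u3 3)).
  { pose proof (I_first_integral _ _ _ 0 T (proj1 T_range)
      (rescaled_flow_solution a1 a2 a3 e1 e2 e3 f1 f2 f3 s u1 u2 u3 Hs Hu r ltac:(lra))) as HI.
    cbv beta in HI. rewrite !rescaled_flow_0 in HI. exact HI. }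
  set (t := 4 * s / r).
  assert (Htr : t * (r / 2) = 2 * s) by (unfold t; field; lra).
  assert (Ht : 0 < t <= 1) by (split; nra).
  assert (Hsu : forall u, Rabs u <= 1 -> Rabs (s * u) <= t * (r / 2)).
  { intros u Hu1. rewrite Htr, Rabs_mult, Rabs_right by lra. nra. }
  assert (Hsw : forall i, Rabs (s * w s u1 u2 u3 i) <= t * (r / 2)).
  { intro i. rewrite Htr, Rabs_mult, Rabs_right by lra.
    pose proof (proj1 (rescaled_flow_spec a1 a2 a3 e1 e2 e3 f1 f2 f3 s u1 u2 u3 Hs Hu i T T_range)).
    unfold w. nra. }
  pose proof (lowest_part_approx t _ _ _ Ht (Hsu u1 H1) (Hsu u2 H2) (Hsu u3 H3)) as Happ_u.
  pose proof (lowest_part_approx t _ _ _ Ht (Hsw 1%nat) (Hsw 2%nat) (Hsw 3%nat)) as Happ_w.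
  rewrite Hconst, psum3_scale in Happ_u. rewrite psum3_scale in Happ_w.
  assert (Hpow : t ^ S m = s ^ m * ((4 / r) ^ S m * s)).
  { unfold t. replace (4 * s / r) with (4 / r * s) by (field; lra).
    rewrite Rpow_mult_distr. simpl pow. ring. }
  rewrite Hpow in Happ_u, Happ_w.
  set (Iw := I (s * w s u1 u2 u3 1) (s * w s u1 u2 u3 2) (s * w s u1 u2 u3 3)) in *.
  set (A := psum3 c u1 u2 u3 m) in *.
  set (Bw := psum3 c (w s u1 u2 u3 1) (w s u1 u2 u3 2) (w s u1 u2 u3 3) m) in *.
  assert (Hsm : 0 < s ^ m) by (apply pow_lt; lra).
  apply (Rmult_le_reg_l (s ^ m)); [exact Hsm|].
  rewrite <- (Rabs_right (s ^ m)) at 1 by lra. rewrite <- Rabs_mult.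
  replace (s ^ m * (Bw - A))
    with ((Iw - c 0%nat 0%nat 0%nat - s ^ m * A) - (Iw - c 0%nat 0%nat 0%nat - s ^ m * Bw))
    by ring.
  eapply Rle_trans; [apply Rabs_triang|]. rewrite Rabs_Ropp. lra.
Qed.

Lemma lowest_part_flow_invariant u1 u2 u3 : Rabs u1 < 1 -> Rabs u2 < 1 -> Rabs u3 < 1 ->
  psum3 c (u1 * exp (f1 * T)) (u2 * exp (f2 * T)) (u3 * exp (f3 * T)) m = psum3 c u1 u2 u3 m.
Proof.
  intros H1 H2 H3.
  apply (continuous3_eq_of_approx (fun x y z => psum3 c x y z m) _ _ _ _
           2 (2 * (4 / r) ^ S m * majorant) (Rmin 1 (r / 4))).
  - apply continuous_psum3.
  - apply Rmin_pos; lra.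
  - intros s [Hs Hs0].
    assert (Hs1 : 0 < s <= 1) by (pose proof (Rmin_l 1 (r / 4)); lra).
    assert (Hu : Rabs u1 <= 1 /\ Rabs u2 <= 1 /\ Rabs u3 <= 1) by lra.
      pose proof (fun i => proj1 (proj2
      (rescaled_flow_spec a1 a2 a3 e1 e2 e3 f1 f2 f3 s u1 u2 u3 Hs1 Hu i T T_range))) as Hnear.
    exists (w s u1 u2 u3 1), (w s u1 u2 u3 2), (w s u1 u2 u3 3).
    repeat split; try apply (Hnear 1%nat); try apply (Hnear 2%nat); try apply (Hnear 3%nat).
    apply lowest_part_flow_estimate; try lra. pose proof (Rmin_r 1 (r / 4)). lra.
Qed.

End LowestPartInvariance.

Lemma resonance_of_invariance c m f1 f2 f3 T : T <> 0 ->
  (forall u1 u2 u3, Rabs u1 < 1 -> Rabs u2 < 1 -> Rabs u3 < 1 ->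
     psum3 c (u1 * exp (f1 * T)) (u2 * exp (f2 * T)) (u3 * exp (f3 * T)) m
     = psum3 c u1 u2 u3 m) ->
  ~ homog_part_zero c m ->
  exists n1 n2 n3 : nat, (n1 + n2 + n3 = m)%nat /\ INR n1 * f1 + INR n2 * f2 + INR n3 * f3 = 0.
Proof.
  intros HT Hinv Hnz.
  set (d := fun i j k =>
    c i j k * exp (INR i * (f1 * T) + INR j * (f2 * T) + INR k * (f3 * T)) - c i j k).
  assert (Hd : homog_part_zero d m).
  { apply (homog_part_zero_of_psum3 d m 1 Rlt_0_1). intros x y z Hx Hy Hz.
    unfold d. rewrite psum3_minus, <- psum3_exp_scale, Hinv by auto. ring. }
  apply NNPP. intro Hno. apply Hnz. intros i j Hi Hj.
  specialize (Hd i j Hi Hj). unfold d in Hd.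
  destruct (Req_dec (c i j (m - i - j)%nat) 0) as [|Hc]; [assumption|]. exfalso. apply Hno.
  exists i, j, (m - i - j)%nat. split; [lia|].
  assert (Hexp :
    exp (INR i * (f1 * T) + INR j * (f2 * T) + INR (m - i - j) * (f3 * T)) = exp 0).
  { rewrite exp_0. apply (Rmult_eq_reg_l (c i j (m - i - j)%nat)); [lra|exact Hc]. }
  apply exp_inv in Hexp.
  replace (INR i * (f1 * T) + INR j * (f2 * T) + INR (m - i - j) * (f3 * T))
    with ((INR i * f1 + INR j * f2 + INR (m - i - j) * f3) * T) in Hexp by ring.
  apply Rmult_integral in Hexp as [Hrel|]; [exact Hrel|contradiction].
Qed.

Theorem theorem2 (a1 a2 a3 e1 e2 e3 f1 f2 f3 : R) :
  (exists (I : R -> R -> R -> R) (r : R),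
      analytic_on_box I r /\
      first_integral_on_box a1 a2 a3 e1 e2 e3 f1 f2 f3 r I /\
      nonconstant_on_box I r) ->
  exists n1 n2 n3 : nat, (0 < n1 + n2 + n3)%nat /\
    INR n1 * f1 + INR n2 * f2 + INR n3 * f3 = 0.
Proof.
  intros [I [r [[Hr [c Hc]] [Hfirst Hnc]]]].
  destruct (lowest_nonzero_part c I r) as [m [Hm [Hnz Hlow]]]; [apply Hc|exact Hnc|].
  destruct (resonance_of_invariance c m f1 f2 f3 (flow_time a1 a2 a3 e1 e2 e3 f1 f2 f3))
    as [n1 [n2 [n3 [Hdeg Hrel]]]]; auto.
  - apply Rgt_not_eq, flow_time_pos.
  - apply (lowest_part_flow_invariant a1 a2 a3 e1 e2 e3 f1 f2 f3 I r); auto.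
  - exists n1, n2, n3. split; [lia|exact Hrel].
Qed.
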